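(* Let $\phi$ be a function from $\mathbb{Z}^d$ to $[0,+\infty)$ such that $\sum_{y\in\mathbb{Z}^d}\phi(y)^2=N$. For any $N\ge1$ and any $\alpha\in(0,1)$, $$P(f_N=\phi)\le\frac{\phi(0)}{\alpha}\exp\Big(-\frac12\mathcal{E}(\phi)+\alpha\sqrt{N|\mathrm{supp}\,\phi|}\Big).$$
   Context: $P$ is the law of the simple random walk $(S_k)$ on $\mathbb{Z}^d$ started at $0$; $L_N(x)=\sum_{k=0}^{N-1}1_{\{S_k=x\}}$ and $f_N=\sqrt{L_N}$. $\mathcal{E}(f)=\frac1{2d}\sum_{y,z\in\mathbb{Z}^d,|y-z|=1}(f(y)-f(z))^2$ (ordered pairs). $\mathrm{supp}\,\phi=\{y:\phi(y)\ne0\}$ and $|\cdot|$ denotes cardinality. *)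

From HB Require Import structures.
From mathcomp Require Import all_boot all_order all_algebra.
From mathcomp Require Import all_classical all_reals all_analysis.
From mathcomp Require Import finmap.
Set Implicit Arguments. Unset Strict Implicit. Unset Printing Implicit Defensive.
Import Order.TTheory GRing.Theory Num.Theory.
Local Open Scope ring_scope.

Definition Zd (d : nat) := {ffun 'I_d -> int}.

Definition origin (d : nat) : Zd d := [ffun _ => 0%Z].

Definition step (d : nat) (s : 'I_d * bool) : Zd d :=
  [ffun j => if j == s.1 then (if s.2 then 1%Z else (-1)%Z) else 0%Z].

Definition pos (d : nat) (w : seq ('I_d * bool)) (k : nat) : Zd d :=
  [ffun j => \sum_(s <- take k w) step s j].

Definition local_time (d : nat) (w : seq ('I_d * bool)) (N : nat) (x : Zd d) : nat :=
  count (fun k => pos w k == x) (iota 0 N).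

Definition fN (R : realType) (d : nat) (w : seq ('I_d * bool)) (N : nat) (x : Zd d) : R :=
  Num.sqrt ((local_time w N x)%:R).

(* P(f_N = phi): the event only depends on the first N-1 steps, which under P
   are i.i.d. uniform in the 2d unit directions; so its probability is the
   number of step sequences of length N-1 realizing it divided by (2d)^(N-1). *)
Definition prob_fN_eq (R : realType) (d N : nat) (phi : Zd d -> R) : R :=
  (#|[set w : N.-1.-tuple ('I_d * bool) | `[< forall x, fN R w N x = phi x >] ]|)%:R
  / ((2 * d)%:R ^+ N.-1).

Definition adjacent (d : nat) (y z : Zd d) : bool :=
  (\sum_(i < d) `|y i - z i|)%N == 1%N.

(* Dirichlet energy E(phi) = 1/(2d) sum over ordered adjacent pairs of (phi y - phi z)^2
   (an esum of nonnegative terms; finite when phi has finite support). *)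
Definition energy (R : realType) (d : nat) (phi : Zd d -> R) : R :=
  fine (\esum_(p in [set p : Zd d * Zd d | adjacent p.1 p.2])
          (((phi p.1 - phi p.2) ^+ 2)%:E)) / (2 * d)%:R.

Definition supp (R : realType) (d : nat) (phi : Zd d -> R) : set (Zd d) :=
  [set y | phi y != 0].

From Pilot Require Import Defs.
From HB Require Import structures.
From mathcomp Require Import all_boot all_order all_algebra.
From mathcomp Require Import all_classical all_reals all_analysis.
From mathcomp Require Import finmap.
From mathcomp Require Import zify ring lra.
Import Order.TTheory GRing.Theory Num.Theory.
Set Implicit Arguments. Unset Strict Implicit. Unset Printing Implicit Defensive.
Local Open Scope ring_scope.

(* Tilt the walk by h = phi on supp phi and h = alpha elsewhere: the Markov chain
   stepping from x to x + e with probability h(x + e) / sum_e' h(x + e') gives the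
   paths of each length weights W summing to 1.  Along a path realising
   {f_N = phi}, W h(0) telescopes into sum_e h(S_(N-1) + e) times the product over
   k < N of h(S_k) / sum_e h(S_k + e).  The first factor is at least 2d alpha, and
   exp(1 - t) <= 1/t with t_k = sum_e h(S_k + e) / (2d phi(S_k)) bounds the k-th
   factor below by exp(1 - t_k) / 2d.  Grouping the exponents by site, with
   L_N = phi^2, their sum becomes N - sum_x phi(x) sum_e h(x + e) / 2d, which is at
   least E(phi)/2 - alpha sum_x phi(x) >= E(phi)/2 - alpha sqrt(N |supp phi|) by
   Cauchy-Schwarz.  So on the event (2d)^(N-1) W is at least the reciprocal of the
   claimed bound, and summing W over the event proves it. *)

Section Walk.
Variable d : nat.
Local Notation dir := ('I_d * bool)%type.

Lemma origin0 : origin d = 0.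
Proof. by apply/ffunP => j; rewrite !ffunE. Qed.

Lemma pos0 (w : seq dir) : pos w 0 = 0.
Proof. by apply/ffunP => j; rewrite !ffunE take0 big_nil. Qed.

Lemma pos_cons (e : dir) (w : seq dir) k : pos (e :: w) k.+1 = step e + pos w k.
Proof. by apply/ffunP => j; rewrite !ffunE /= big_cons ffunE. Qed.

Lemma step_inj : injective (@step d).
Proof.
move=> [i b] [i' b'] /ffunP /(_ i); rewrite !ffunE /= eqxx.
by case: eqVneq => [<-|_]; case: b; case: b'.
Qed.

Lemma step_negb (i : 'I_d) b : step (i, ~~ b) = - step (i, b).
Proof. by apply/ffunP => j; rewrite !ffunE /=; case: (j == i); case: b. Qed.

Lemma adjacent_step (y z : Zd d) : Defs.adjacent y z -> exists e, z = y + step e.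
Proof.
move=> /eqP dist1.
have : (\sum_(i < d) `|y i - z i|)%N != 0%N by rewrite dist1.
rewrite sum_nat_eq0 negb_forall => /existsP[i /= yz_i].
move: dist1; rewrite (bigD1 i) //=.
move: yz_i; set a := `|y i - z i|%N; set b := (\sum_(j < d | j != i) _)%N.
move=> /negbTE a_ne0 ab1; have a1 : a = 1%N by lia.
have : b == 0%N by lia.
clear ab1 a_ne0; rewrite {}/b sum_nat_eq0 => /forallP yz_j; rewrite {}/a in a1.
exists (i, z i - y i == 1); apply/ffunP => j; rewrite !ffunE /=.
have [->|ji] := eqVneq j i; last by have := yz_j j; rewrite ji /=; lia.
by case: eqP => /= ?; lia.
Qed.

End Walk.

Section Sums.
Variable R : realType.

Lemma ler_sum_uniq (T : eqType) (s1 s2 : seq T) (f : T -> R) :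
  uniq s1 -> uniq s2 -> (forall x, x \in s1 -> x \notin s2 -> f x = 0) ->
  (forall x, x \in s2 -> 0 <= f x) ->
  \sum_(x <- s1) f x <= \sum_(x <- s2) f x.
Proof.
move=> u1 u2 f_out f_ge0.
have -> : \sum_(x <- s1) f x = \sum_(x <- s1 | x \in s2) f x.
  rewrite [RHS]big_mkcond /= !big_seq; apply: eq_bigr => x x_s1.
  by case: ifP => // /negbT; exact: f_out.
have -> : \sum_(x <- s1 | x \in s2) f x = \sum_(x <- s2 | x \in s1) f x.
  rewrite -[LHS]big_filter -[RHS]big_filter; apply/perm_big/uniq_perm; rewrite ?filter_uniq //.
  by move=> x; rewrite !mem_filter andbC.
rewrite [leRHS](bigID (mem s1)) /= lerDl big_seq_cond.
by apply: sumr_ge0 => x /andP[/f_ge0].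
Qed.

Lemma sumr_const_seq (T : Type) (s : seq T) (c : R) :
  \sum_(x <- s) c = (size s)%:R * c.
Proof. by rewrite big_const_seq count_predT iter_addr addr0 mulr_natl. Qed.

Lemma cauchy_schwarz_sum (T : Type) (s : seq T) (f : T -> R) :
  (\sum_(x <- s) f x) ^+ 2 <= (size s)%:R * \sum_(x <- s) f x ^+ 2.
Proof.
set S1 := \sum_(x <- s) f x; set S2 := \sum_(x <- s) f x ^+ 2.
have inner x : \sum_(y <- s) (f x - f y) ^+ 2 = (size s)%:R * f x ^+ 2 + S2 - 2 * f x * S1.
  rewrite mulr_sumr -sumr_const_seq -big_split /= -sumrB.
  by apply: eq_bigr => y _; ring.
have : 0 <= \sum_(x <- s) \sum_(y <- s) (f x - f y) ^+ 2.
  by apply: sumr_ge0 => x _; apply: sumr_ge0 => y _; exact: sqr_ge0.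
under eq_bigr => x _ do rewrite inner.
rewrite sumrB big_split /= sumr_const_seq -mulr_sumr -mulr_suml -mulr_sumr -/S1 -/S2.
rewrite expr2; lra.
Qed.

Lemma fine_esum_le_sum (T : choiceType) (A : set T) (f : T -> R) (s : seq T) :
  uniq s -> (forall p, A p -> f p != 0 -> p \in s) -> (forall p, 0 <= f p) ->
  fine (\esum_(p in A) (f p)%:E) <= \sum_(p <- s) f p.
Proof.
move=> s_uniq f_supp f_ge0.
have esum_le : (\esum_(p in A) (f p)%:E <= (\sum_(p <- s) f p)%:E)%E.
  apply: ge_ereal_sup => _ [X [X_fin XA] <-].
  rewrite fsbig_finite // sumEFin lee_fin; apply: ler_sum_uniq => // p.
  rewrite in_fset_set // => /set_mem Xp p_s.
  by apply/eqP; apply: contraNT p_s; apply: f_supp; exact: XA.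
have esum_ge0 : (0 <= \esum_(p in A) (f p)%:E)%E.
  by apply: esum_ge0 => p _; rewrite lee_fin.
by move: esum_le esum_ge0; case: (\esum_(_ in _) _)%E.
Qed.

Lemma expR_1B_le_inv (t : R) : 0 < t -> expR (1 - t) <= t^-1.
Proof.
move=> t_gt0; rewrite -opprB expRN lef_pV2 ?posrE ?expR_gt0 //.
by have := expR_ge1Dx (t - 1); lra.
Qed.

Lemma card_le_weight (T : finType) (E : {set T}) (W : T -> R) (c : R) :
  0 <= c -> (forall t, 0 <= W t) -> \sum_t W t = 1 ->
  (forall t, t \in E -> 1 <= c * W t) -> #|E|%:R <= c.
Proof.
move=> c_ge0 W_ge0 W_sum1 E_W.
rewrite -sum1_card natr_sum; apply: (@le_trans _ _ (\sum_(t in E) c * W t)).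
  exact: ler_sum.
rewrite -[leRHS]mulr1 -W_sum1 mulr_sumr [leRHS](bigID (mem E)) /= lerDl.
by apply: sumr_ge0 => t _; exact: mulr_ge0.
Qed.

End Sums.

Section LocalTime.
Variables (R : realType) (d : nat).
Local Notation dir := ('I_d * bool)%type.

Lemma sum_local_time (F : Zd d -> R) (w : seq dir) (N : nat) (K : seq (Zd d)) :
  uniq K -> (forall k, (k < N)%N -> pos w k \in K) ->
  \sum_(k <- iota 0 N) F (pos w k) = \sum_(x <- K) (local_time w N x)%:R * F x.
Proof.
move=> K_uniq path_K.
have local_timeE x : (local_time w N x)%:R * F x =
    \sum_(k <- iota 0 N) if pos w k == x then F (pos w k) else 0.
  rewrite /local_time -sum1_count natr_sum mulr_suml big_mkcond /=.
  by apply: eq_bigr => k _; case: eqP => [->|_]; rewrite ?mul1r ?mul0r.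
under [RHS]eq_bigr do rewrite local_timeE.
rewrite exchange_big /= big_seq [RHS]big_seq; apply: eq_bigr => k.
rewrite mem_iota add0n => /andP[_ /path_K kK].
rewrite (bigD1_seq (pos w k)) //= eqxx big1 ?addr0 // => x /negbTE.
by rewrite eq_sym => ->.
Qed.

End LocalTime.

Section PathWeight.
Variables (R : realType) (d : nat) (h : Zd d -> R).
Local Notation dir := ('I_d * bool)%type.

Definition nbr_sum (x : Zd d) : R := \sum_(e : dir) h (x + step e).

Fixpoint path_weight (x : Zd d) (w : seq dir) : R :=
  if w is e :: w' then h (x + step e) / nbr_sum x * path_weight (x + step e) w'
  else 1.

Lemma nbr_sum_gt0 x : (0 < d)%N -> (forall y, 0 < h y) -> 0 < nbr_sum x.
Proof.
move=> d_gt0 h_gt0; rewrite /nbr_sum (bigD1 (Ordinal d_gt0, true)) //=.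
by rewrite ltr_wpDr ?h_gt0 // sumr_ge0 // => e _; exact/ltW/h_gt0.
Qed.

Lemma path_weight_ge0 x w : (forall y, 0 <= h y) -> 0 <= path_weight x w.
Proof.
move=> h_ge0; elim: w x => [|e w IHw] x //=.
by rewrite !mulr_ge0 ?invr_ge0 ?sumr_ge0.
Qed.

Hypothesis nbr_sum_neq0 : forall x, nbr_sum x != 0.

Lemma path_weight_sum n x : \sum_(t : n.-tuple dir) path_weight x t = 1.
Proof.
elim: n x => [|n IHn] x.
  rewrite (eq_bigr (fun=> 1)) => [|t _]; last by rewrite tuple0.
  by rewrite sumr_const card_tuple.
rewrite (reindex (fun p : dir * n.-tuple dir => [tuple of p.1 :: p.2])) /=; last first.
  exists (fun t : n.+1.-tuple dir => (thead t, [tuple of behead t])).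
    by move=> [e t] _ /=; congr pair; apply: val_inj.
  by move=> t _; rewrite [RHS]tuple_eta.
rewrite -(pair_bigA _ (fun e (t : n.-tuple dir) =>
  h (x + step e) / nbr_sum x * path_weight (x + step e) t)) /=.
under eq_bigr do rewrite -mulr_sumr IHn mulr1.
by rewrite -mulr_suml divff //; exact: nbr_sum_neq0.
Qed.

Lemma path_weight_telescope x (w : seq dir) :
  path_weight x w * h x = nbr_sum (x + pos w (size w)) *
    \prod_(k < (size w).+1) (h (x + pos w k) / nbr_sum (x + pos w k)).
Proof.
elim: w x => [|e w IHw] x /=.
  by rewrite big_ord1 pos0 addr0 mul1r mulrC divfK.
rewrite pos_cons addrA big_ord_recl /= pos0 addr0.
under eq_bigr do rewrite /bump /= add1n pos_cons addrA.
rewrite mulrCA -IHw; ring.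
Qed.

End PathWeight.

Section Energy.
Variables (R : realType) (d : nat).
Local Notation dir := ('I_d * bool)%type.

Lemma card_dir : #|{: dir}| = (2 * d)%N.
Proof. by rewrite card_prod card_ord card_bool mulnC. Qed.

Definition adj_corr (phi : Zd d -> R) (K : seq (Zd d)) : R :=
  \sum_(x <- K) \sum_(e : dir) phi x * phi (x + step e).

Definition nbhd (K : seq (Zd d)) : seq (Zd d) :=
  undup (K ++ [seq x + step e | x <- K, e <- index_enum dir]).

Lemma nbhd_uniq K : uniq (nbhd K).
Proof. exact: undup_uniq. Qed.

Lemma mem_nbhd_self K x : x \in K -> x \in nbhd K.
Proof. by move=> xK; rewrite mem_undup mem_cat xK. Qed.

Lemma mem_nbhd_step K x e : x \in K -> x + step e \in nbhd K.
Proof.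
move=> xK; rewrite mem_undup mem_cat; apply/orP; right.
by apply: (allpairs_f (fun x e => x + step e)); rewrite ?mem_index_enum.
Qed.

Definition edges (K : seq (Zd d)) : seq (Zd d * Zd d) :=
  [seq (x, x + step e) | x <- nbhd K, e <- index_enum dir].

Lemma edges_uniq K : uniq (edges K).
Proof.
apply: allpairs_uniq; rewrite ?nbhd_uniq ?index_enum_uniq //.
by move=> [x e] [x' e'] _ _ /= [<-] /addrI /step_inj ->.
Qed.

Variables (phi : Zd d -> R) (K : seq (Zd d)).
Hypothesis K_uniq : uniq K.
Hypothesis phi_supp : forall x, phi x != 0 -> x \in K.
Hypothesis phi_ge0 : forall x, 0 <= phi x.

Lemma phi_out x : x \notin K -> phi x = 0.
Proof. by move=> xK; apply/eqP; apply: contraNT xK; exact: phi_supp. Qed.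

Lemma mem_edges y z : Defs.adjacent y z -> phi y != phi z -> (y, z) \in edges K.
Proof.
move=> /adjacent_step [[i b] ->] phi_yz.
apply: (allpairs_f (fun x e => (x, x + step e))); rewrite ?mem_index_enum //.
have [yK|yK] := boolP (y \in K); first exact: mem_nbhd_self.
have zK : y + step (i, b) \in K.
  by apply: phi_supp; rewrite -(phi_out yK) eq_sym.
by rewrite -[y](addrK (step (i, b))) -step_negb mem_nbhd_step.
Qed.

Lemma sum_sqr_le_supp (s : seq (Zd d)) :
  uniq s -> \sum_(x <- s) phi x ^+ 2 <= \sum_(x <- K) phi x ^+ 2.
Proof.
move=> s_uniq; apply: ler_sum_uniq => // [x _ /phi_out ->|x _].
  by rewrite expr0n.
exact: sqr_ge0.
Qed.

Lemma edge_sum_le :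
  \sum_(x <- nbhd K) \sum_(e : dir) (phi x - phi (x + step e)) ^+ 2 <=
    2 * ((2 * d)%:R * \sum_(x <- K) phi x ^+ 2) - 2 * adj_corr phi K.
Proof.
set N := \sum_(x <- K) phi x ^+ 2.
have sq_self : \sum_(x <- nbhd K) \sum_(e : dir) phi x ^+ 2 <= (2 * d)%:R * N.
  under eq_bigr do rewrite sumr_const card_dir -mulr_natl.
  by rewrite -mulr_sumr ler_wpM2l ?sum_sqr_le_supp ?nbhd_uniq.
have sq_nbr : \sum_(x <- nbhd K) \sum_(e : dir) phi (x + step e) ^+ 2 <= (2 * d)%:R * N.
  rewrite exchange_big /=; apply: (@le_trans _ _ (\sum_(e : dir) N)).
    apply: ler_sum => e _; rewrite -(big_map (+%R^~ (step e)) xpredT (fun y => phi y ^+ 2)).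
    by rewrite sum_sqr_le_supp // map_inj_uniq ?nbhd_uniq //; exact: addIr.
  by rewrite sumr_const card_dir mulr_natl.
have corr : adj_corr phi K <=
    \sum_(x <- nbhd K) \sum_(e : dir) phi x * phi (x + step e).
  apply: ler_sum_uniq => //; first exact: nbhd_uniq.
    by move=> x /mem_nbhd_self ->.
  by move=> x _; apply: sumr_ge0 => e _; exact: mulr_ge0.
have expand : \sum_(x <- nbhd K) \sum_(e : dir) (phi x - phi (x + step e)) ^+ 2 =
    \sum_(x <- nbhd K) \sum_(e : dir) phi x ^+ 2 +
    \sum_(x <- nbhd K) \sum_(e : dir) phi (x + step e) ^+ 2 -
    2 * \sum_(x <- nbhd K) \sum_(e : dir) phi x * phi (x + step e).
  rewrite mulr_sumr -big_split -sumrB /=; apply: eq_bigr => x _.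
  rewrite mulr_sumr -big_split -sumrB /=; apply: eq_bigr => e _; ring.
rewrite expand; lra.
Qed.

Lemma energy_le :
  (0 < d)%N -> energy phi <= 2 * \sum_(x <- K) phi x ^+ 2 - adj_corr phi K / d%:R.
Proof.
move=> d_gt0.
have two_d_gt0 : 0 < (2 * d)%:R :> R by rewrite ltr0n muln_gt0.
rewrite /energy ler_pdivrMr //.
apply: le_trans (fine_esum_le_sum (s := edges K) _ _ _) _.
- exact: edges_uniq.
- by move=> [y z] /= yz; rewrite sqrf_eq0 subr_eq0; exact: mem_edges.
- by move=> p; exact: sqr_ge0.
rewrite big_allpairs_dep /=; apply: le_trans edge_sum_le _.
rewrite natrM le_eqVlt; apply/orP; left; apply/eqP.
by field; rewrite pnatr_eq0 -lt0n.
Qed.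

End Energy.

Definition tilt (R : realType) (d : nat) (phi : Zd d -> R) (alpha : R) (y : Zd d) : R :=
  if phi y == 0 then alpha else phi y.

Lemma tilt_gt0 (R : realType) (d : nat) (phi : Zd d -> R) (alpha : R) y :
  (forall y, 0 <= phi y) -> 0 < alpha -> 0 < tilt phi alpha y.
Proof.
move=> phi_ge0 alpha_gt0; rewrite /tilt.
by case: eqP => // /eqP phi_y; rewrite lt0r phi_y phi_ge0.
Qed.

Section PathBound.
Variables (R : realType) (d : nat) (phi : Zd d -> R) (alpha : R).
Variables (n : nat) (w : seq ('I_d * bool)).
Hypothesis d_gt0 : (0 < d)%N.
Hypothesis phi_ge0 : forall y, 0 <= phi y.
Hypothesis supp_fin : finite_set (supp phi).
Hypothesis alpha01 : 0 < alpha < 1.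
Hypothesis w_size : size w = n.
Hypothesis w_event : forall x, fN R w n.+1 x = phi x.

Local Notation K := (fset_set (supp phi)).
Local Notation h := (tilt phi alpha).
Local Notation D := ((2 * d)%:R : R).

Let D_gt0 : 0 < D. Proof. by rewrite ltr0n muln_gt0. Qed.
Let alpha_gt0 : 0 < alpha. Proof. by case/andP: alpha01. Qed.

Lemma mem_supp_fset x : (x \in K) = (phi x != 0).
Proof. by rewrite in_fset_set //; apply/idP/idP => [/set_mem|/mem_set]. Qed.

Lemma phi_sqr x : phi x ^+ 2 = (local_time w n.+1 x)%:R.
Proof. by rewrite -w_event /fN sqr_sqrtr ?ler0n. Qed.

Lemma phi_ge1 x : phi x != 0 -> 1 <= phi x.
Proof.
rewrite -w_event /fN; case: (local_time w n.+1 x) => [|m]; first by rewrite sqrtr0 eqxx.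
by move=> _; rewrite -[leLHS]sqrtr1; apply: ler_wsqrtr; rewrite ler1n.
Qed.

Lemma pos_in_supp k : (k < n.+1)%N -> pos w k \in K.
Proof.
move=> k_lt; rewrite mem_supp_fset -w_event /fN sqrtr_eq0 -ltNge ltr0n.
rewrite /local_time -has_count; apply/hasP; exists k => //.
by rewrite mem_iota.
Qed.

Lemma sum_phi_sqr : \sum_(x <- K) phi x ^+ 2 = n.+1%:R.
Proof.
have := sum_local_time (fun _ => 1 : R) (fset_uniq K) pos_in_supp.
rewrite sumr_const_seq size_iota mulr1 => ->.
by apply: eq_bigr => x _; rewrite mulr1 phi_sqr.
Qed.

Lemma tilt_path k : (k < n.+1)%N -> h (pos w k) = phi (pos w k).
Proof. by move=> /pos_in_supp; rewrite mem_supp_fset /tilt => /negbTE ->. Qed.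

Lemma tilt_ge y : alpha <= h y.
Proof.
rewrite /tilt; case: eqP => // /eqP /phi_ge1 phi_y_ge1.
by case/andP: alpha01 => _ alpha_lt1; lra.
Qed.

Lemma tilt_le y : h y <= phi y + alpha.
Proof. by have := alpha_gt0; rewrite /tilt; case: eqP => [->|_]; lra. Qed.

Lemma nbr_sum_tilt_ge x : D * alpha <= nbr_sum h x.
Proof.
rewrite /nbr_sum -card_dir mulr_natl -sumr_const.
by apply: ler_sum => e _; exact: tilt_ge.
Qed.

Definition tilt_exponent : R :=
  n.+1%:R - (\sum_(x <- K) phi x * nbr_sum h x) / D.

Lemma sum_path_exponent :
  \sum_(k < n.+1) (1 - nbr_sum h (pos w k) / (D * phi (pos w k))) = tilt_exponent.
Proof.
rewrite -(big_mkord xpredT (fun k => 1 - nbr_sum h (pos w k) / (D * phi (pos w k)))).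
rewrite (sum_local_time (fun x => 1 - nbr_sum h x / (D * phi x)) (fset_uniq K)) //; last first.
  exact: pos_in_supp.
rewrite /tilt_exponent -sum_phi_sqr mulr_suml -sumrB big_seq [RHS]big_seq.
apply: eq_bigr => x; rewrite mem_supp_fset => phi_x.
rewrite -phi_sqr; field.
by rewrite phi_x pnatr_eq0 -lt0n d_gt0.
Qed.

Let nbr_sum_tilt_gt0 x : 0 < nbr_sum h x.
Proof. exact: lt_le_trans (mulr_gt0 D_gt0 alpha_gt0) (nbr_sum_tilt_ge x). Qed.

Lemma path_weight_tilt_ge :
  alpha * expR tilt_exponent / D ^+ n <= path_weight h 0 w * phi (origin d).
Proof.
have step_ge k : (k < n.+1)%N ->
    expR (1 - nbr_sum h (pos w k) / (D * phi (pos w k))) / D <=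
    h (0 + pos w k) / nbr_sum h (0 + pos w k).
  move=> k_lt; rewrite add0r tilt_path //.
  have phi_gt0 : 0 < phi (pos w k).
    by rewrite lt0r phi_ge0 andbT -mem_supp_fset pos_in_supp.
  rewrite ler_pdivrMr //; apply: le_trans (expR_1B_le_inv _) _.
    by rewrite divr_gt0 ?mulr_gt0.
  by rewrite invf_div [_ * D]mulrC mulrA.
have prod_ge : expR tilt_exponent / D ^+ n.+1 <=
    \prod_(k < n.+1) (h (0 + pos w k) / nbr_sum h (0 + pos w k)).
  have -> : expR tilt_exponent / D ^+ n.+1 =
      \prod_(k < n.+1) (expR (1 - nbr_sum h (pos w k) / (D * phi (pos w k))) / D).
    by rewrite prodf_div prodr_const card_ord -expR_sum sum_path_exponent.
  apply: ler_prod => k _; apply/andP; split; last exact: step_ge.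
  by rewrite divr_ge0 ?expR_ge0 ?ler0n.
have h0 : h 0 = phi (origin d) by rewrite origin0 -(pos0 w) tilt_path.
have := path_weight_telescope (fun x => lt0r_neq0 (nbr_sum_tilt_gt0 x)) 0 w.
rewrite w_size h0 => ->.
have -> : alpha * expR tilt_exponent / D ^+ n =
    D * alpha * (expR tilt_exponent / D ^+ n.+1).
  by rewrite exprS; field; rewrite expf_neq0 ?pnatr_eq0 -?lt0n ?muln_gt0 d_gt0.
apply: ler_pM => //; last exact: nbr_sum_tilt_ge.
exact: mulr_ge0 (ltW D_gt0) (ltW alpha_gt0).
Qed.

Lemma tilt_exponent_ge :
  1 / 2 * energy phi - alpha * Num.sqrt (n.+1%:R * (#|` K|)%:R) <= tilt_exponent.
Proof.
set M := \sum_(x <- K) phi x * nbr_sum h x; set P := \sum_(x <- K) phi x.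
have M_le : M <= adj_corr phi K + D * alpha * P.
  rewrite /M /adj_corr /P mulr_sumr -big_split; apply: ler_sum => x _ /=.
  have -> : D * alpha * phi x = \sum_(e : 'I_d * bool) alpha * phi x.
    by rewrite sumr_const card_dir -mulrA mulr_natl.
  rewrite /nbr_sum mulr_sumr -big_split; apply: ler_sum => e _ /=.
  by rewrite [alpha * _]mulrC -mulrDr ler_wpM2l ?tilt_le.
have P_le : P <= Num.sqrt (n.+1%:R * (#|` K|)%:R).
  have P_ge0 : 0 <= P by apply: sumr_ge0 => x _; exact: phi_ge0.
  rewrite -(ger0_norm P_ge0) -sqrtr_sqr; apply: ler_wsqrtr.
  by rewrite mulrC -sum_phi_sqr; exact: cauchy_schwarz_sum.
have E_le := energy_le (fset_uniq K) (fun x => eqbRL (mem_supp_fset x)) phi_ge0 d_gt0.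
have corr_half : adj_corr phi K / d%:R = 2 * (adj_corr phi K / D).
  by rewrite natrM; field; rewrite pnatr_eq0 -lt0n d_gt0.
have M_div : M / D <= adj_corr phi K / D + alpha * P.
  by rewrite ler_pdivrMr // mulrDl divfK ?(lt0r_neq0 D_gt0) //; lra.
have aP_le : alpha * P <= alpha * Num.sqrt (n.+1%:R * (#|` K|)%:R).
  by rewrite ler_pM2l.
rewrite sum_phi_sqr in E_le; rewrite /tilt_exponent -/M; lra.
Qed.

Lemma path_bound :
  1 <= phi (origin d) / alpha *
    expR (- (1 / 2) * energy phi + alpha * Num.sqrt (n.+1%:R * (#|` K|)%:R)) *
    D ^+ n * path_weight h 0 w.
Proof.
set B := - (1 / 2) * energy phi + _.
have exponent_ge0 : 0 <= tilt_exponent + B by have := tilt_exponent_ge; rewrite /B; lra.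
have scale_ge0 : 0 <= expR B * D ^+ n / alpha.
  by rewrite divr_ge0 ?mulr_ge0 ?expR_ge0 ?exprn_ge0 ?ler0n ?ltW.
have expE : expR (tilt_exponent + B) =
    alpha * expR tilt_exponent / D ^+ n * (expR B * D ^+ n / alpha).
  by rewrite expRD; field; rewrite expf_neq0 ?lt0r_neq0.
have := ler_wpM2r scale_ge0 path_weight_tilt_ge; rewrite -expE.
have := expR_ge1Dx (tilt_exponent + B).
set W := path_weight h 0 w; move=> exp_ge le_exp.
suff -> : phi (origin d) / alpha * expR B * D ^+ n * W =
  W * phi (origin d) * (expR B * D ^+ n / alpha) by lra.
by ring.
Qed.

End PathBound.

Theorem proposition3p2 (R : realType) (d N : nat) (phi : Zd d -> R) (alpha : R) :
  (0 < d)%N ->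
  (1 <= N)%N ->
  (forall y, 0 <= phi y) ->
  finite_set (supp phi) ->
  \esum_(y in [set: Zd d]) ((phi y ^+ 2)%:E) = ((N%:R : R)%:E) ->
  0 < alpha < 1 ->
  @prob_fN_eq R d N phi <=
    phi (origin d) / alpha *
    expR (- (1 / 2) * energy phi
          + alpha * Num.sqrt (N%:R * (#|` fset_set (supp phi)|)%:R)).
Proof.
move=> d_gt0 N_ge1 phi_ge0 supp_fin _ alpha01.
case: N N_ge1 => [//|n] _; have /andP[alpha_gt0 _] := alpha01.
have alpha_ge0 := ltW alpha_gt0.
have h_gt0 y : 0 < tilt phi alpha y by exact: tilt_gt0.
rewrite /prob_fN_eq ler_pdivrMr ?exprn_gt0 ?ltr0n ?muln_gt0 ?d_gt0 //=.
apply: (card_le_weight (W := fun t : n.-tuple _ => path_weight (tilt phi alpha) 0 t)).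
- by rewrite !mulr_ge0 ?invr_ge0 ?expR_ge0 ?exprn_ge0 ?ler0n ?phi_ge0.
- by move=> t; apply: path_weight_ge0 => y; exact: ltW.
- by apply: path_weight_sum => x; rewrite lt0r_neq0 ?nbr_sum_gt0.
- move=> t; rewrite inE => /asboolP w_event.
  exact: path_bound d_gt0 phi_ge0 supp_fin alpha01 (size_tuple t) w_event.
Qed.
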